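(* Any incline $R$ with $|R|\geq 3$ is not $k$-simple.
   Context: A semiring $(R,+,\cdot)$ is a set with two binary operations such that $(R,+)$ is a commutative semigroup, $(R,\cdot)$ is a semigroup, and multiplication distributes over addition from both sides; no zero or identity is assumed. An incline is a semiring with $r+r=r$ for all $r$ and $x+xy=x=x+yx$ for all $x,y\in R$. A zero of $R$ is an element $0$ with $0+r=r$ and $0r=r0=0$ for all $r\in R$. An ideal of $R$ is a nonempty subset $A\subseteq R$ with $a+b\in A$ and $ra,ar\in A$ for all $a,b\in A$, $r\in R$; the trivial ideals are $R$ and, if $R$ has a zero $0$, $\{0\}$. For an ideal $A$, its $k$-closure is $\overline{A}=\{x\in R\mid x+a=b \text{ for some } a,b\in A\}$, and $A$ is a $k$-ideal if $A=\overline{A}$. $R$ is $k$-simple if it has no $k$-ideals other than the trivial ideals. *)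

Set Implicit Arguments.

Section Defs.
Variable R : Type.
Variables (add mul : R -> R -> R).

Definition is_semiring : Prop :=
  (forall x y z, add x (add y z) = add (add x y) z) /\
  (forall x y, add x y = add y x) /\
  (forall x y z, mul x (mul y z) = mul (mul x y) z) /\
  (forall x y z, mul x (add y z) = add (mul x y) (mul x z)) /\
  (forall x y z, mul (add x y) z = add (mul x z) (mul y z)).

Definition is_incline : Prop :=
  is_semiring /\
  (forall r, add r r = r) /\
  (forall x y, add x (mul x y) = x /\ add x (mul y x) = x).

Definition is_zero (z : R) : Prop :=
  forall r, add z r = r /\ mul z r = z /\ mul r z = z.

Definition is_ideal (A : R -> Prop) : Prop :=
  (exists a, A a) /\
  (forall a b, A a -> A b -> A (add a b)) /\
  (forall r a, A a -> A (mul r a) /\ A (mul a r)).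

Definition k_closure (A : R -> Prop) : R -> Prop :=
  fun x => exists a b, A a /\ A b /\ add x a = b.

Definition is_k_ideal (A : R -> Prop) : Prop :=
  is_ideal A /\ (forall x, A x <-> k_closure A x).

Definition is_trivial_ideal (A : R -> Prop) : Prop :=
  (forall x, A x) \/ (exists z, is_zero z /\ forall x, A x <-> x = z).

Definition k_simple : Prop :=
  forall A, is_k_ideal A -> is_trivial_ideal A.
End Defs.

(* In an incline the principal down-set {x | x + a = a} of any element a is a k-ideal.
   It is all of R only when a is the greatest element, and it is {0} only when a is
   the zero; both elements are unique, so a third element yields a nontrivial k-ideal. *)

Set Implicit Arguments.

Section DownSets.
Variables (R : Type) (add mul : R -> R -> R).
Hypothesis addA : forall x y z, add x (add y z) = add (add x y) z.
Hypothesis addC : forall x y, add x y = add y x.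
Hypothesis addxx : forall r, add r r = r.
Hypothesis add_mulr_absorb : forall x y, add x (mul x y) = x.
Hypothesis add_mull_absorb : forall x y, add x (mul y x) = x.

Definition down_set (a : R) : R -> Prop := fun x => add x a = a.

Definition is_greatest (a : R) : Prop := forall x, add x a = a.

Lemma down_set_downward_closed (a x y : R) :
  down_set a x -> add y x = x -> down_set a y.
Proof.
  unfold down_set; intros Hx Hyx.
  rewrite <- Hx, addA, Hyx; reflexivity.
Qed.

Lemma down_set_is_ideal (a : R) : is_ideal add mul (down_set a).
Proof.
  split; [exists a; apply addxx | split].
  - intros x y Hx Hy; unfold down_set.
    rewrite <- addA, Hy; exact Hx.
  - intros r x Hx; split; apply (down_set_downward_closed Hx); rewrite addC.
    + apply add_mull_absorb.
    + apply add_mulr_absorb.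
Qed.

Lemma down_set_k_closed (a x : R) :
  k_closure add (down_set a) x -> down_set a x.
Proof.
  intros (a' & b' & Ha' & Hb' & E); unfold down_set in *.
  transitivity (add x (add a' a)); [rewrite Ha'; reflexivity |].
  rewrite addA, E; exact Hb'.
Qed.

Lemma down_set_is_k_ideal (a : R) : is_k_ideal add mul (down_set a).
Proof.
  split; [apply down_set_is_ideal | intros x; split].
  - intros Hx; exists a, a; unfold down_set; auto.
  - apply down_set_k_closed.
Qed.

Lemma trivial_down_set (a : R) :
  is_trivial_ideal add mul (down_set a) -> is_greatest a \/ is_zero add mul a.
Proof.
  intros [Hall | (z & Hz & Hdown)]; [left; exact Hall | right].
  assert (a = z) as -> by (apply Hdown, addxx).
  exact Hz.
Qed.

Lemma greatest_unique (a b : R) : is_greatest a -> is_greatest b -> a = b.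
Proof. intros Ha Hb; rewrite <- (Hb a), addC; symmetry; apply Ha. Qed.

Lemma zero_unique (a b : R) : is_zero add mul a -> is_zero add mul b -> a = b.
Proof.
  intros Ha Hb; destruct (Ha b) as [Eb _]; destruct (Hb a) as [Ea _].
  rewrite <- Eb, addC; symmetry; exact Ea.
Qed.

Lemma k_simple_greatest_or_zero (a : R) :
  k_simple add mul -> is_greatest a \/ is_zero add mul a.
Proof. intros K; apply trivial_down_set, K, down_set_is_k_ideal. Qed.

End DownSets.

Theorem lemma5p2 (R : Type) (add mul : R -> R -> R) :
  is_incline add mul ->
  (exists a b c : R, a <> b /\ a <> c /\ b <> c) ->
  ~ k_simple add mul.
Proof.
  intros ((addA & addC & _ & _ & _) & addxx & absorb) (a & b & c & ab & ac & bc) K.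
  assert (greatest_or_zero : forall x, is_greatest add x \/ is_zero add mul x).
  { intros x; apply k_simple_greatest_or_zero; auto;
      intros; apply absorb. }
  pose proof (greatest_unique addC) as top_uniq.
  pose proof (zero_unique (mul := mul) addC) as zero_uniq.
  destruct (greatest_or_zero a) as [Ta | Za], (greatest_or_zero b) as [Tb | Zb],
    (greatest_or_zero c) as [Tc | Zc]; eauto.
Qed.
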